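(* Assume $c_i=c>0$, $\gamma_i=\gamma>0$, $\nu_i=\nu>0$, $\rho_i=\rho\in(-1,1)$ for all $i$. Let $f^0$ denote $f$ with $\gamma_{\rm P}$ replaced by $0$. Then $f^0$ has a unique maximiser, it is symmetric with common values $z^0_{s,n}$ (all $z^{S,i}$), $z^0_{d,n}$ (all diagonal $z^{Q,i,i}$), $z^0_{o,n}$ (all off-diagonal $z^{Q,i,j}$, $n\ge2$), these are the limits as $\gamma_{\rm P}\downarrow0$ of the corresponding values of the maximiser of $f$, and $$z^0_{s,n}=-\frac{\sqrt n}{\sigma}\frac{\rho}{Ac\nu}\frac{1}{n-\eta_n},\quad z^0_{o,n}=\frac{\rho^2}{Ac\nu^2}\frac{1}{n-\eta_n}\ (n\ge2),\quad z^0_{d,n}=\frac{1}{Ac\nu^2}\Big(1+\frac{\gamma\rho^2/A}{n-\eta_n}\Big),$$ where $A=\gamma+\frac{1}{c\nu^2}$ and $\eta_n=\rho^2\big((n-1)+\frac{\gamma}{A}\big)\in[0,n)$. Moreover, with all other parameters held fixed and $\nu^\dagger_{n,\rho}=\sqrt{\frac{n(1-\rho^2)+\rho^2}{\gamma cn(1-\rho^2)}}$: $|z^0_{s,n}|$ is increasing in $|\rho|$ and decreasing in $c$; $|z^0_{s,n}|$ is increasing in $\nu$ on $(0,\nu^\dagger_{n,\rho}]$ and decreasing on $[\nu^\dagger_{n,\rho},\infty)$; $z^0_{o,n}$ (for $n\ge2$) increases with $|\rho|$ and decreases with $c$ and with $\nu$; $z^0_{d,n}$ increases with $|\rho|$ and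 decreases with $c$ and with $\nu$.
   Context: Fix an integer $n\ge1$ and parameters $\sigma>0$, $\gamma_{\rm P}>0$, and for each $i\in\{1,\dots,n\}$: $c_i>0$, $\gamma_i>0$, $\nu_i>0$, $\rho_i\in(-1,1)$. Write $\nu=(\nu_1,\dots,\nu_n)^\top$, $\rho=(\rho_1,\dots,\rho_n)^\top$. The variables are a matrix $z^Q=(z^{Q,i,j})_{i,j}\in\mathbb{R}^{n\times n}$ ($i$ row, $j$ column) and a vector $z^S=(z^{S,1},\dots,z^{S,n})^\top\in\mathbb{R}^n$. Define $f:\mathbb{R}^{n\times n}\times\mathbb{R}^n\to\mathbb{R}$ by $$f(z^Q,z^S)=-\frac1n\sum_{i=1}^n\Big(\frac{(z^{Q,i,i})^2}{2c_i}+\frac{\gamma_i}{2}\sum_{j=1}^n\nu_j^2(z^{Q,i,j})^2+\frac{\gamma_i\sigma^2}{2}(z^{S,i})^2+\frac{\gamma_i\sigma}{\sqrt n}z^{S,i}\sum_{j=1}^n\rho_j\nu_jz^{Q,i,j}-\frac{z^{Q,i,i}}{c_i}\Big)-\frac{\gamma_{\rm P}}{2n^2}\sum_{i=1}^n\Big(\Big(\nu_i-\nu_i\sum_{j=1}^nz^{Q,j,i}-\frac{\rho_i\sigma}{\sqrt n}\sum_{j=1}^nz^{S,j}\Big)^2+\frac{(1-\rho_i^2)\sigma^2}{n}\Big(\sum_{j=1}^nz^{S,j}\Big)^2\Big).$$ $f$ has a unique global maximiser $(z^{Q,\star},z^{S,\star})$. *)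

From HB Require Import structures.
From mathcomp Require Import all_boot all_order all_algebra.
From mathcomp Require Import all_classical all_reals all_analysis.
Set Implicit Arguments. Unset Strict Implicit. Unset Printing Implicit Defensive.
Import Order.TTheory GRing.Theory Num.Theory.
Local Open Scope ring_scope.

Section Defs.
Variable R : realType.

(* The objective f, general (heterogeneous) parameters.
   zQ : n x n matrix (row i, column j), zS : column vector (zS i 0 = z^{S,i}). *)
Definition fobj (n : nat) (sigma gammaP : R) (c gam nu rho : 'I_n -> R)
    (zQ : 'M[R]_n) (zS : 'cV[R]_n) : R :=
  - (n%:R)^-1 * \sum_(i < n)
      ( (zQ i i) ^+ 2 / (2 * c i)
        + gam i / 2 * \sum_(j < n) (nu j) ^+ 2 * (zQ i j) ^+ 2
        + gam i * sigma ^+ 2 / 2 * (zS i 0) ^+ 2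
        + gam i * sigma / Num.sqrt (n%:R) * zS i 0
            * \sum_(j < n) rho j * nu j * zQ i j
        - zQ i i / c i )
  - gammaP / (2 * (n%:R) ^+ 2) * \sum_(i < n)
      ( (nu i - nu i * \sum_(j < n) zQ j i
           - rho i * sigma / Num.sqrt (n%:R) * \sum_(j < n) zS j 0) ^+ 2
        + (1 - (rho i) ^+ 2) * sigma ^+ 2 / n%:R * (\sum_(j < n) zS j 0) ^+ 2 ).

Definition fhom (n : nat) (sigma gammaP c gam nu rho : R)
    (z : 'M[R]_n * 'cV[R]_n) : R :=
  fobj sigma gammaP (fun _ => c) (fun _ => gam) (fun _ => nu) (fun _ => rho) z.1 z.2.

Definition is_maximiser (T : Type) (F : T -> R) (z : T) : Prop :=
  forall y, F y <= F z.

Definition Acoef (gam c nu : R) : R := gam + 1 / (c * nu ^+ 2).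

Definition eta_n (n : nat) (gam c nu rho : R) : R :=
  rho ^+ 2 * ((n%:R - 1) + gam / Acoef gam c nu).

Definition z0s (n : nat) (sigma gam c nu rho : R) : R :=
  - (Num.sqrt (n%:R) / sigma) * (rho / (Acoef gam c nu * c * nu))
    * (1 / (n%:R - eta_n n gam c nu rho)).

Definition z0o (n : nat) (gam c nu rho : R) : R :=
  rho ^+ 2 / (Acoef gam c nu * c * nu ^+ 2) * (1 / (n%:R - eta_n n gam c nu rho)).

Definition z0d (n : nat) (gam c nu rho : R) : R :=
  1 / (Acoef gam c nu * c * nu ^+ 2)
  * (1 + (gam * rho ^+ 2 / Acoef gam c nu) / (n%:R - eta_n n gam c nu rho)).

Definition nudag (n : nat) (gam c rho : R) : R :=
  Num.sqrt ((n%:R * (1 - rho ^+ 2) + rho ^+ 2) / (gam * c * n%:R * (1 - rho ^+ 2))).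

End Defs.

From HB Require Import structures.
From mathcomp Require Import all_boot all_order all_algebra.
From mathcomp Require Import all_classical all_reals all_analysis.
From mathcomp Require Import ring lra.
Import Order.TTheory GRing.Theory Num.Theory.
Import numFieldNormedType.Exports.
Local Open Scope classical_set_scope.
Local Open Scope ring_scope.
Set Implicit Arguments. Unset Strict Implicit.

(* Under homogeneous parameters each row of [f^0] is a concave quadratic in
   (z^{Q,i,.}, z^{S,i}); completing the square in the cross term sigma rho shows
   that its quadratic part is positive definite because |rho| < 1.  Solving the
   first-order conditions gives the closed forms, all with the common denominator
   [zden], and f^0 zstar - f^0 y is the sum of these quadratic forms evaluated at
   y - zstar, which gives existence and uniqueness.  The penalty of f is
   nonnegative, so a maximiser y of f satisfies Q (y - zstar) <= n gammaP
   penalty(zstar): every entry of y is within O(sqrt gammaP) of zstar.  The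
   comparative statics are sign computations on the closed forms; in particular
   |z0s| depends on nu like x / (a + k x^2), which peaks at sqrt (a / k) = nudag. *)

Lemma ltr_pdiv_cross (F : numFieldType) (x y x' y' : F) :
  0 < y -> 0 < y' -> (x / y < x' / y') = (x * y' < x' * y).
Proof. by move=> y0 y'0; rewrite ltr_pdivrMr // mulrAC ltr_pdivlMr. Qed.

Lemma ler_ltr_wpM2l (F : numDomainType) (x a b : F) :
  0 <= x -> a < b -> x * a <= x * b /\ (0 < x -> x * a < x * b).
Proof. by move=> x0 ab; split=> [|x_gt0]; rewrite ?ler_wpM2l ?ltr_pM2l // ltW. Qed.

Lemma ltr_div_quad (F : numFieldType) (a k x y : F) :
  0 < a + k * x ^+ 2 -> 0 < a + k * y ^+ 2 ->
  (x / (a + k * x ^+ 2) < y / (a + k * y ^+ 2)) = (0 < (y - x) * (a - k * x * y)).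
Proof.
move=> Dx Dy; rewrite ltr_pdiv_cross // -subr_gt0.
by congr (0 < _); ring.
Qed.

Lemma ler_sum_term (F : numDomainType) (m : nat) (G : 'I_m -> F) (j : 'I_m) :
  (forall k, 0 <= G k) -> G j <= \sum_(k < m) G k.
Proof. by move=> G0; rewrite (bigD1 j) //= lerDl sumr_ge0. Qed.

Lemma sum_sqr_affine (F : comPzRingType) (m : nat) (y : 'I_m -> F) (a k : F) :
  \sum_(j < m) (a * y j + k) ^+ 2
  = a ^+ 2 * \sum_(j < m) y j ^+ 2 + 2 * a * k * \sum_(j < m) y j + m%:R * k ^+ 2.
Proof.
rewrite (eq_bigr (fun j => a ^+ 2 * y j ^+ 2 + 2 * a * k * y j + k ^+ 2)); last first.
  by move=> j _; ring.
rewrite !big_split /= -!mulr_sumr sumr_const card_ord -mulr_natl; ring.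
Qed.

(* From [v = nu h + k t], [h^2 <= 2 (v^2 + k^2 t^2) / nu^2]. *)
Lemma sqr_le_of_affine (F : realFieldType) (Q v t h nu g kap k : F) :
  0 < nu -> 0 < g -> 0 < kap ->
  g / 2 * v ^+ 2 <= Q -> kap * t ^+ 2 <= Q -> nu * h + k * t = v ->
  h ^+ 2 <= ((4 / g + 2 * k ^+ 2 / kap) / nu ^+ 2) * Q.
Proof.
move=> nu0 g0 k0 + ht vE; rewrite -vE => hv.
have v2 : 2 * (nu * h + k * t) ^+ 2 <= 4 / g * Q.
  have -> : 2 * (nu * h + k * t) ^+ 2 = 4 / g * (g / 2 * (nu * h + k * t) ^+ 2).
    by field; rewrite gt_eqF.
  by rewrite ler_wpM2l // divr_ge0 // ltW.
have t2 : 2 * k ^+ 2 * t ^+ 2 <= 2 * k ^+ 2 / kap * Q.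
  have -> : 2 * k ^+ 2 * t ^+ 2 = 2 * k ^+ 2 / kap * (kap * t ^+ 2).
    by field; rewrite gt_eqF.
  apply: ler_wpM2l ht; apply: divr_ge0 (ltW k0).
  by apply: mulr_ge0; rewrite ?sqr_ge0.
have hs : (nu * h) ^+ 2 <= 2 * (nu * h + k * t) ^+ 2 + 2 * k ^+ 2 * t ^+ 2.
  by have := sqr_ge0 (nu * h + 2 * k * t); nra.
rewrite mulrAC ler_pdivlMr ?exprn_gt0 // mulrC -exprMn; lra.
Qed.

Lemma cvg_at_right0_of_sqr_le (F : realFieldType) (f : F -> F) (l M : F) :
  (forall x, 0 < x -> (f x - l) ^+ 2 <= M * x) -> f x @[x --> 0^'+] --> l.
Proof.
move=> fl; apply/cvgrPdist_lt => e e0.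
have M1 : 0 < `|M| + 1 by rewrite ltr_wpDl.
near=> x.
have x0 : 0 < x by near: x; exact: nbhs_right_gt.
have xe : (`|M| + 1) * x < e ^+ 2.
  rewrite mulrC -ltr_pdivlMr //; near: x.
  by apply: nbhs_right_lt; rewrite divr_gt0 ?exprn_gt0.
have Mx : M * x <= `|M| * x by rewrite ler_pM2r // real_ler_norm ?num_real.
have lt : `|l - f x| ^+ 2 < e ^+ 2.
  by rewrite real_normK ?num_real // -sqrrN opprB; have := fl x x0; nra.
by have := normr_ge0 (l - f x); nra.
Unshelve. all: by end_near.
Qed.

Lemma subr_sqr_gt0 (F : realFieldType) (rho : F) : -1 < rho < 1 -> 0 < 1 - rho ^+ 2.
Proof. by move=> /andP[r1 r2]; nra. Qed.

Lemma ltr_norm_sqr (F : realDomainType) (x y : F) : `|x| < `|y| -> x ^+ 2 < y ^+ 2.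
Proof.
move=> lt; rewrite -(real_normK (num_real x)) -(real_normK (num_real y)).
by have := normr_ge0 x; nra.
Qed.

Lemma Acoef_gt0 (R : realType) (gam c nu : R) : 0 < gam -> 0 < c -> 0 < nu -> 0 < Acoef gam c nu.
Proof. by move=> g0 c0 nu0; rewrite addr_gt0 // divr_gt0 // mulr_gt0 // exprn_gt0. Qed.

Section Homogeneous.
Variables (R : realType) (n : nat).
Hypothesis n_gt0 : (0 < n)%N.

Let n_ge1 : 1 <= n%:R :> R. Proof. by rewrite ler1n. Qed.

Let nrho_gt0 (rho : R) : -1 < rho < 1 -> 0 < n%:R * (1 - rho ^+ 2).
Proof. by move=> /subr_sqr_gt0 r; rewrite mulr_gt0 // ltr0n. Qed.

Let curv_gt0 (gam c rho : R) : 0 < gam -> 0 < c -> -1 < rho < 1 ->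
  0 < gam * c * (n%:R * (1 - rho ^+ 2)).
Proof. by move=> g0 c0 rr; apply: mulr_gt0; [exact: mulr_gt0 | exact: nrho_gt0]. Qed.

Lemma eta_n_bounds (gam c nu rho : R) : 0 < gam -> 0 < c -> 0 < nu -> -1 < rho < 1 ->
  0 <= eta_n n gam c nu rho < n%:R.
Proof.
move=> g0 c0 nu0 rr.
have A0 := Acoef_gt0 g0 c0 nu0.
have q0 : 0 < gam / Acoef gam c nu by exact: divr_gt0.
have q1 : gam / Acoef gam c nu < 1.
  by rewrite ltr_pdivrMr // mul1r ltrDl divr_gt0 // mulr_gt0 // exprn_gt0.
have r2 := subr_sqr_gt0 rr; have r0 := sqr_ge0 rho; have n1 := n_ge1.
rewrite /eta_n; set q := gam / Acoef gam c nu in q0 q1 *.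
apply/andP; split; first by apply: mulr_ge0; lra.
have : rho ^+ 2 * (n%:R - 1 + q) < 1 * (n%:R - 1 + q) by rewrite ltr_pM2r //; lra.
lra.
Qed.

(* Clearing the nested fractions of the paper's formulas leaves the common
   denominator [zweight rho + gam c n (1 - rho^2) nu^2]. *)
Definition zweight (rho : R) : R := n%:R * (1 - rho ^+ 2) + rho ^+ 2.

Definition zden (gam c nu rho : R) : R :=
  zweight rho + gam * c * (n%:R * (1 - rho ^+ 2)) * nu ^+ 2.

Lemma zweight_gt0 (rho : R) : -1 < rho < 1 -> 0 < zweight rho.
Proof. by move=> rr; rewrite /zweight ltr_wpDr ?sqr_ge0 ?nrho_gt0. Qed.

Lemma zden_gt0 (gam c nu rho : R) : 0 < gam -> 0 < c -> 0 < nu -> -1 < rho < 1 ->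
  0 < zden gam c nu rho.
Proof.
move=> g0 c0 nu0 rr; apply: addr_gt0; first exact: zweight_gt0.
by rewrite mulr_gt0 ?curv_gt0 ?exprn_gt0.
Qed.

Lemma zden_ltr_c (gam c1 c2 nu rho : R) : 0 < gam -> c1 < c2 -> 0 < nu -> -1 < rho < 1 ->
  zden gam c1 nu rho < zden gam c2 nu rho.
Proof.
move=> g0 c12 nu0 rr; rewrite -subr_gt0.
have -> : zden gam c2 nu rho - zden gam c1 nu rho
          = gam * (c2 - c1) * (n%:R * (1 - rho ^+ 2)) * nu ^+ 2 by rewrite /zden; ring.
apply: mulr_gt0; last exact: exprn_gt0.
by apply: mulr_gt0; [rewrite mulr_gt0 // subr_gt0 | exact: nrho_gt0].
Qed.

Lemma zden_ltr_nu (gam c nu1 nu2 rho : R) : 0 < gam -> 0 < c -> 0 < nu1 -> nu1 < nu2 ->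
  -1 < rho < 1 -> zden gam c nu1 rho < zden gam c nu2 rho.
Proof.
move=> g0 c0 nu10 nu12 rr; rewrite -subr_gt0.
have -> : zden gam c nu2 rho - zden gam c nu1 rho
          = gam * c * (n%:R * (1 - rho ^+ 2)) * ((nu2 - nu1) * (nu2 + nu1)).
  by rewrite /zden; ring.
apply: mulr_gt0; first by apply: mulr_gt0; [exact: mulr_gt0 | exact: nrho_gt0].
by apply: mulr_gt0; lra.
Qed.

Section FixedParameters.
Variables (sigma gam c nu rho : R).
Hypotheses (sigma_gt0 : 0 < sigma) (gam_gt0 : 0 < gam) (c_gt0 : 0 < c) (nu_gt0 : 0 < nu).
Hypothesis rho_bounds : -1 < rho < 1.

Let den_gt0 := zden_gt0 gam_gt0 c_gt0 nu_gt0 rho_bounds.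
Let gcnu_gt0 : 0 < gam * (c * nu ^+ 2). Proof. by rewrite !mulr_gt0 // exprn_gt0. Qed.

Lemma z0sE : z0s n sigma gam c nu rho
  = - (Num.sqrt n%:R / sigma) * (rho * nu / zden gam c nu rho).
Proof.
move: gcnu_gt0 den_gt0; rewrite /z0s /eta_n /Acoef /zden /zweight => t0 D0.
by field; rewrite !lt0r_neq0 //; lra.
Qed.

Lemma z0oE : z0o n gam c nu rho = rho ^+ 2 / zden gam c nu rho.
Proof.
move: gcnu_gt0 den_gt0; rewrite /z0o /eta_n /Acoef /zden /zweight => t0 D0.
by field; rewrite !lt0r_neq0 //; lra.
Qed.

Lemma z0dE : z0d n gam c nu rho = zweight rho / zden gam c nu rho.
Proof.
have /andP[_ eta_lt] := eta_n_bounds gam_gt0 c_gt0 nu_gt0 rho_bounds.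
move: gcnu_gt0 eta_lt den_gt0; rewrite /z0d /eta_n /Acoef /zden /zweight => t0 eta_lt D0.
have E0 : n%:R - rho ^+ 2 * (n%:R - 1 + gam / (gam + 1 / (c * nu ^+ 2))) != 0.
  by rewrite subr_eq0 eq_sym lt_eqF.
by field; rewrite !lt0r_neq0 //; lra.
Qed.

Lemma normr_z0s : `|z0s n sigma gam c nu rho|
  = Num.sqrt n%:R / sigma * `|rho| * (nu / zden gam c nu rho).
Proof.
have K0 : 0 <= Num.sqrt n%:R / sigma by rewrite divr_ge0 ?sqrtr_ge0 ?ltW.
rewrite z0sE normrM normrN (ger0_norm K0) !normrM normfV.
by rewrite (gtr0_norm nu_gt0) (gtr0_norm den_gt0) !mulrA.
Qed.

End FixedParameters.

Lemma normr_z0s_ltr_rho (sigma gam c nu rho1 rho2 : R) :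
  0 < sigma -> 0 < gam -> 0 < c -> 0 < nu ->
  -1 < rho1 < 1 -> -1 < rho2 < 1 -> `|rho1| < `|rho2| ->
  `|z0s n sigma gam c nu rho1| < `|z0s n sigma gam c nu rho2|.
Proof.
move=> s0 g0 c0 nu0 rr1 rr2 lt12.
have K0 : 0 < Num.sqrt n%:R / sigma by rewrite divr_gt0 ?sqrtr_gt0 ?ltr0n.
rewrite !normr_z0s // -!(mulrA (Num.sqrt n%:R / sigma)) ltr_pM2l // !mulrA.
rewrite ltr_pdiv_cross ?zden_gt0 // /zden /zweight.
rewrite -[rho1 ^+ 2]real_normK ?num_real // -[rho2 ^+ 2]real_normK ?num_real //.
have u0 := normr_ge0 rho1; have n1 := n_ge1.
set u1 := `|rho1| in lt12 u0 *; set u2 := `|rho2| in lt12 *.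
have b0 : 0 < gam * c * nu ^+ 2 by rewrite !mulr_gt0 // exprn_gt0.
rewrite -subr_gt0.
have -> : u2 * nu * (n%:R * (1 - u1 ^+ 2) + u1 ^+ 2 + gam * c * (n%:R * (1 - u1 ^+ 2)) * nu ^+ 2)
   - u1 * nu * (n%:R * (1 - u2 ^+ 2) + u2 ^+ 2 + gam * c * (n%:R * (1 - u2 ^+ 2)) * nu ^+ 2)
   = nu * (u2 - u1) * (n%:R * (1 + gam * c * nu ^+ 2)
                       + u1 * u2 * (n%:R - 1 + gam * c * nu ^+ 2 * n%:R)) by ring.
apply: mulr_gt0; first by rewrite mulr_gt0 // subr_gt0.
apply: ltr_wpDr; last by rewrite mulr_gt0 //; lra.
by rewrite !mulr_ge0 //; nra.
Qed.

Lemma normr_z0s_ltr_quot (sigma gam c1 c2 nu1 nu2 rho : R) :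
  0 < sigma -> 0 < gam -> 0 < c1 -> 0 < c2 -> 0 < nu1 -> 0 < nu2 -> -1 < rho < 1 ->
  nu1 / zden gam c1 nu1 rho < nu2 / zden gam c2 nu2 rho ->
  `|z0s n sigma gam c1 nu1 rho| <= `|z0s n sigma gam c2 nu2 rho|
  /\ (rho != 0 -> `|z0s n sigma gam c1 nu1 rho| < `|z0s n sigma gam c2 nu2 rho|).
Proof.
move=> s0 g0 c10 c20 nu10 nu20 rr quot_lt.
have K0 : 0 < Num.sqrt n%:R / sigma by rewrite divr_gt0 ?sqrtr_gt0 ?ltr0n.
have X0 : 0 <= Num.sqrt n%:R / sigma * `|rho| by rewrite mulr_ge0 ?normr_ge0 ?(ltW K0).
have [le lt] := ler_ltr_wpM2l X0 quot_lt.
rewrite !normr_z0s //; split=> // rho0.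
by apply: lt; rewrite pmulr_rgt0 // normr_gt0.
Qed.

Lemma normr_z0s_decr_c (sigma gam c1 c2 nu rho : R) :
  0 < sigma -> 0 < gam -> 0 < c1 -> c1 < c2 -> 0 < nu -> -1 < rho < 1 ->
  `|z0s n sigma gam c2 nu rho| <= `|z0s n sigma gam c1 nu rho|
  /\ (rho != 0 -> `|z0s n sigma gam c2 nu rho| < `|z0s n sigma gam c1 nu rho|).
Proof.
move=> s0 g0 c10 c12 nu0 rr; have c20 : 0 < c2 by lra.
apply: normr_z0s_ltr_quot => //.
by rewrite ltr_pdiv_cross ?zden_gt0 // ltr_pM2l // zden_ltr_c.
Qed.

Lemma nudag_gt0 (gam c rho : R) : 0 < gam -> 0 < c -> -1 < rho < 1 ->
  0 < nudag n gam c rho.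
Proof.
move=> g0 c0 rr; rewrite /nudag sqrtr_gt0 divr_gt0 //; first exact: zweight_gt0.
by rewrite -mulrA curv_gt0.
Qed.

Lemma zweight_nudag (gam c rho : R) : 0 < gam -> 0 < c -> -1 < rho < 1 ->
  zweight rho = gam * c * (n%:R * (1 - rho ^+ 2)) * nudag n gam c rho ^+ 2.
Proof.
move=> g0 c0 rr; have k0 := curv_gt0 g0 c0 rr.
rewrite /nudag -[gam * c * n%:R * _]mulrA sqr_sqrtr; last first.
  by rewrite divr_ge0 ?ltW ?zweight_gt0.
by rewrite mulrC divfK // gt_eqF.
Qed.

Lemma normr_z0s_incr_nu (sigma gam c nu1 nu2 rho : R) :
  0 < sigma -> 0 < gam -> 0 < c -> -1 < rho < 1 ->
  0 < nu1 -> nu1 < nu2 -> nu2 <= nudag n gam c rho ->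
  `|z0s n sigma gam c nu1 rho| <= `|z0s n sigma gam c nu2 rho|
  /\ (rho != 0 -> `|z0s n sigma gam c nu1 rho| < `|z0s n sigma gam c nu2 rho|).
Proof.
move=> s0 g0 c0 rr nu10 nu12 nu2_le; have nu20 : 0 < nu2 by lra.
apply: normr_z0s_ltr_quot => //.
have := zweight_nudag g0 c0 rr; have := curv_gt0 g0 c0 rr.
rewrite /zden ltr_div_quad -?/(zden _ _ _ _) ?zden_gt0 //.
set k := gam * c * _ => k0 ->.
have d2 : nu1 * nu2 < nudag n gam c rho ^+ 2 by nra.
by apply: mulr_gt0; rewrite subr_gt0 // -mulrA ltr_pM2l.
Qed.

Lemma normr_z0s_decr_nu (sigma gam c nu1 nu2 rho : R) :
  0 < sigma -> 0 < gam -> 0 < c -> -1 < rho < 1 ->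
  nudag n gam c rho <= nu1 -> nu1 < nu2 ->
  `|z0s n sigma gam c nu2 rho| <= `|z0s n sigma gam c nu1 rho|
  /\ (rho != 0 -> `|z0s n sigma gam c nu2 rho| < `|z0s n sigma gam c nu1 rho|).
Proof.
move=> s0 g0 c0 rr nu1_ge nu12; have d0 := nudag_gt0 g0 c0 rr.
have nu10 : 0 < nu1 by lra.
have nu20 : 0 < nu2 by lra.
apply: normr_z0s_ltr_quot => //.
have := zweight_nudag g0 c0 rr; have := curv_gt0 g0 c0 rr.
rewrite /zden ltr_div_quad -?/(zden _ _ _ _) ?zden_gt0 //.
set k := gam * c * _ => k0 ->.
have d2 : nudag n gam c rho ^+ 2 < nu2 * nu1 by nra.
rewrite -mulrNN !opprB; apply: mulr_gt0; rewrite subr_gt0 //.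
by rewrite -mulrA ltr_pM2l.
Qed.

Lemma z0o_ltr_rho (gam c nu rho1 rho2 : R) : 0 < gam -> 0 < c -> 0 < nu ->
  -1 < rho1 < 1 -> -1 < rho2 < 1 -> `|rho1| < `|rho2| ->
  z0o n gam c nu rho1 < z0o n gam c nu rho2.
Proof.
move=> g0 c0 nu0 rr1 rr2 /ltr_norm_sqr lt12.
rewrite !z0oE // ltr_pdiv_cross ?zden_gt0 // /zden /zweight -subr_gt0.
have b0 : 0 < gam * c * nu ^+ 2 by rewrite !mulr_gt0 // exprn_gt0.
set x1 := rho1 ^+ 2 in lt12 *; set x2 := rho2 ^+ 2 in lt12 *.
have -> : x2 * (n%:R * (1 - x1) + x1 + gam * c * (n%:R * (1 - x1)) * nu ^+ 2)
   - x1 * (n%:R * (1 - x2) + x2 + gam * c * (n%:R * (1 - x2)) * nu ^+ 2)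
   = (x2 - x1) * (n%:R * (1 + gam * c * nu ^+ 2)) by ring.
by rewrite mulr_gt0 ?subr_gt0 // mulr_gt0 ?ltr0n // addr_gt0.
Qed.

Lemma z0d_ltr_rho (gam c nu rho1 rho2 : R) : 0 < gam -> 0 < c -> 0 < nu ->
  -1 < rho1 < 1 -> -1 < rho2 < 1 -> `|rho1| < `|rho2| ->
  z0d n gam c nu rho1 < z0d n gam c nu rho2.
Proof.
move=> g0 c0 nu0 rr1 rr2 /ltr_norm_sqr lt12.
rewrite !z0dE // ltr_pdiv_cross ?zden_gt0 // /zden /zweight -subr_gt0.
have b0 : 0 < gam * c * nu ^+ 2 by rewrite !mulr_gt0 // exprn_gt0.
set x1 := rho1 ^+ 2 in lt12 *; set x2 := rho2 ^+ 2 in lt12 *.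
have -> : (n%:R * (1 - x2) + x2)
     * (n%:R * (1 - x1) + x1 + gam * c * (n%:R * (1 - x1)) * nu ^+ 2)
   - (n%:R * (1 - x1) + x1)
     * (n%:R * (1 - x2) + x2 + gam * c * (n%:R * (1 - x2)) * nu ^+ 2)
   = (x2 - x1) * (n%:R * (gam * c * nu ^+ 2)) by ring.
by rewrite mulr_gt0 ?subr_gt0 // mulr_gt0 ?ltr0n.
Qed.

Lemma z0o_decr_zden (gam c1 c2 nu1 nu2 rho : R) :
  0 < gam -> 0 < c1 -> 0 < c2 -> 0 < nu1 -> 0 < nu2 -> -1 < rho < 1 ->
  zden gam c1 nu1 rho < zden gam c2 nu2 rho ->
  z0o n gam c2 nu2 rho <= z0o n gam c1 nu1 rho
  /\ (rho != 0 -> z0o n gam c2 nu2 rho < z0o n gam c1 nu1 rho).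
Proof.
move=> g0 c10 c20 nu10 nu20 rr D12.
have inv_lt : (zden gam c2 nu2 rho)^-1 < (zden gam c1 nu1 rho)^-1.
  by rewrite ltf_pV2 ?posrE ?zden_gt0.
have [le lt] := ler_ltr_wpM2l (sqr_ge0 rho) inv_lt.
rewrite !z0oE //; split=> // rho0.
by apply: lt; rewrite exprn_even_gt0.
Qed.

Lemma z0d_decr_zden (gam c1 c2 nu1 nu2 rho : R) :
  0 < gam -> 0 < c1 -> 0 < c2 -> 0 < nu1 -> 0 < nu2 -> -1 < rho < 1 ->
  zden gam c1 nu1 rho < zden gam c2 nu2 rho ->
  z0d n gam c2 nu2 rho < z0d n gam c1 nu1 rho.
Proof.
move=> g0 c10 c20 nu10 nu20 rr D12.
by rewrite !z0dE // ltr_pM2l ?zweight_gt0 // ltf_pV2 ?posrE ?zden_gt0.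
Qed.

Lemma z0o_decr_c (gam c1 c2 nu rho : R) :
  0 < gam -> 0 < c1 -> c1 < c2 -> 0 < nu -> -1 < rho < 1 ->
  z0o n gam c2 nu rho <= z0o n gam c1 nu rho
  /\ (rho != 0 -> z0o n gam c2 nu rho < z0o n gam c1 nu rho).
Proof.
move=> g0 c10 c12 nu0 rr.
by apply: z0o_decr_zden => //; [lra | exact: zden_ltr_c].
Qed.

Lemma z0o_decr_nu (gam c nu1 nu2 rho : R) :
  0 < gam -> 0 < c -> 0 < nu1 -> nu1 < nu2 -> -1 < rho < 1 ->
  z0o n gam c nu2 rho <= z0o n gam c nu1 rho
  /\ (rho != 0 -> z0o n gam c nu2 rho < z0o n gam c nu1 rho).
Proof.
move=> g0 c0 nu10 nu12 rr.
by apply: z0o_decr_zden => //; [lra | exact: zden_ltr_nu].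
Qed.

Lemma z0d_decr_c (gam c1 c2 nu rho : R) :
  0 < gam -> 0 < c1 -> c1 < c2 -> 0 < nu -> -1 < rho < 1 ->
  z0d n gam c2 nu rho < z0d n gam c1 nu rho.
Proof.
move=> g0 c10 c12 nu0 rr.
by apply: z0d_decr_zden => //; [lra | exact: zden_ltr_c].
Qed.

Lemma z0d_decr_nu (gam c nu1 nu2 rho : R) :
  0 < gam -> 0 < c -> 0 < nu1 -> nu1 < nu2 -> -1 < rho < 1 ->
  z0d n gam c nu2 rho < z0d n gam c nu1 rho.
Proof.
move=> g0 c0 nu10 nu12 rr.
by apply: z0d_decr_zden => //; [lra | exact: zden_ltr_nu].
Qed.

Section Maximiser.
Variables (sigma gam c nu rho : R).
Hypotheses (sigma_gt0 : 0 < sigma) (gam_gt0 : 0 < gam) (c_gt0 : 0 < c) (nu_gt0 : 0 < nu).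
Hypothesis rho_bounds : -1 < rho < 1.

Let sqrtn_gt0 : 0 < Num.sqrt n%:R :> R. Proof. by rewrite sqrtr_gt0 ltr0n. Qed.

Definition row_cost (y : 'I_n -> R) (s : R) (i : 'I_n) : R :=
  y i ^+ 2 / (2 * c) + gam / 2 * \sum_(j < n) nu ^+ 2 * y j ^+ 2
  + gam * sigma ^+ 2 / 2 * s ^+ 2
  + gam * sigma / Num.sqrt n%:R * s * \sum_(j < n) rho * nu * y j
  - y i / c.

Definition penalty (z : 'M[R]_n * 'cV[R]_n) : R :=
  (2 * n%:R ^+ 2)^-1 * \sum_(i < n)
    ((nu - nu * \sum_(j < n) z.1 j i
         - rho * sigma / Num.sqrt n%:R * \sum_(j < n) z.2 j 0) ^+ 2
     + (1 - rho ^+ 2) * sigma ^+ 2 / n%:R * (\sum_(j < n) z.2 j 0) ^+ 2).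

Lemma fhomE (gP : R) (z : 'M[R]_n * 'cV[R]_n) :
  fhom sigma gP c gam nu rho z
  = - n%:R^-1 * \sum_(i < n) row_cost (fun j => z.1 i j) (z.2 i 0) i - gP * penalty z.
Proof. by rewrite /fhom /fobj /row_cost /penalty /=; ring. Qed.

Lemma penalty_ge0 (z : 'M[R]_n * 'cV[R]_n) : 0 <= penalty z.
Proof.
have r2 := subr_sqr_gt0 rho_bounds.
rewrite /penalty mulr_ge0 ?invr_ge0 ?mulr_ge0 ?exprn_ge0 ?ler0n //.
apply: sumr_ge0 => i _; apply: addr_ge0; first exact: sqr_ge0.
by rewrite mulr_ge0 ?sqr_ge0 // divr_ge0 ?ler0n // mulr_ge0 ?sqr_ge0 ?ltW.
Qed.

Definition row_quad (h : 'I_n -> R) (t : R) (i : 'I_n) : R :=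
  h i ^+ 2 / (2 * c) + gam / 2 * \sum_(j < n) (nu * h j + sigma * rho * t / Num.sqrt n%:R) ^+ 2
  + gam * sigma ^+ 2 * (1 - rho ^+ 2) / 2 * t ^+ 2.

Lemma row_costE (y : 'I_n -> R) (s : R) (i : 'I_n) :
  row_cost y s i = row_quad y s i - y i / c.
Proof.
rewrite /row_cost /row_quad sum_sqr_affine -!mulr_sumr.
have sqrtnK : Num.sqrt n%:R ^+ 2 = n%:R :> R by rewrite sqr_sqrtr ?ler0n.
move: sqrtn_gt0 sqrtnK; set r := Num.sqrt n%:R => r0 <-.
by field; rewrite !gt_eqF.
Qed.

Definition zstar : 'M[R]_n * 'cV[R]_n :=
  (\matrix_(i, j) (if i == j then z0d n gam c nu rho else z0o n gam c nu rho),
   \col_i z0s n sigma gam c nu rho).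

Let zs := z0s n sigma gam c nu rho.
Let zd := z0d n gam c nu rho.
Let zo := z0o n gam c nu rho.

Lemma z0_stationary_offdiag : nu * zo + sigma * rho * zs / Num.sqrt n%:R = 0.
Proof.
have D0 := zden_gt0 gam_gt0 c_gt0 nu_gt0 rho_bounds.
rewrite /zo /zs z0oE // z0sE //.
by move: sqrtn_gt0; set r := Num.sqrt _ => r0; field; rewrite !gt_eqF.
Qed.

Lemma z0_stationary_diag :
  (zd - 1) / c + gam * nu * (nu * zd + sigma * rho * zs / Num.sqrt n%:R) = 0.
Proof.
have := zden_gt0 gam_gt0 c_gt0 nu_gt0 rho_bounds.
rewrite /zd /zs z0dE // z0sE // /zden /zweight.
by move: sqrtn_gt0; set r := Num.sqrt _ => r0 D0; field; rewrite !gt_eqF.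
Qed.

Lemma z0_stationary_s : gam * (nu * zd + sigma * rho * zs / Num.sqrt n%:R) * sigma * rho
  / Num.sqrt n%:R + gam * sigma ^+ 2 * (1 - rho ^+ 2) * zs = 0.
Proof.
have sqrtnK : Num.sqrt n%:R ^+ 2 = n%:R :> R by rewrite sqr_sqrtr ?ler0n.
have := zden_gt0 gam_gt0 c_gt0 nu_gt0 rho_bounds.
rewrite /zd /zs z0dE // z0sE // /zden /zweight.
move: sqrtn_gt0 sqrtnK; set r := Num.sqrt _ => r0 <- D0.
by field; rewrite !gt_eqF.
Qed.

Lemma row_cost_expand (y : 'I_n -> R) (s : R) (i : 'I_n) :
  row_cost y s i = row_cost (fun j => zstar.1 i j) zs i
                   + row_quad (fun j => y j - zstar.1 i j) (s - zs) i.
Proof.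
have zE j : zstar.1 i j = if i == j then zd else zo by rewrite mxE.
rewrite !row_costE /row_quad.
set v := fun x t => nu * x + sigma * rho * t / Num.sqrt n%:R.
have cross : \sum_(j < n) v (zstar.1 i j) zs * v (y j - zstar.1 i j) (s - zs)
             = v zd zs * v (y i - zd) (s - zs).
  rewrite (bigD1 i) //= big1 ?addr0 ?zE ?eqxx // => j ji.
  by rewrite zE eq_sym (negbTE ji) /v z0_stationary_offdiag mul0r.
have split_sum : \sum_(j < n) v (y j) s ^+ 2 = \sum_(j < n) v (zstar.1 i j) zs ^+ 2
    + 2 * \sum_(j < n) v (zstar.1 i j) zs * v (y j - zstar.1 i j) (s - zs)
    + \sum_(j < n) v (y j - zstar.1 i j) (s - zs) ^+ 2.
  rewrite mulr_sumr -!big_split; apply: eq_bigr => j _ /=.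
  by rewrite /v; field; rewrite gt_eqF.
rewrite split_sum cross !zE eqxx.
(* The part linear in the deviation vanishes by stationarity. *)
apply/eqP; rewrite -subr_eq0; apply/eqP.
transitivity ((y i - zd) * ((zd - 1) / c + gam * nu * v zd zs)
  + (s - zs) * (gam * v zd zs * sigma * rho / Num.sqrt n%:R
                + gam * sigma ^+ 2 * (1 - rho ^+ 2) * zs)).
  by rewrite /v; field; rewrite !gt_eqF.
by rewrite /v z0_stationary_diag z0_stationary_s !mulr0 addr0.
Qed.

Let kap := gam * sigma ^+ 2 * (1 - rho ^+ 2) / 2.

Let kap_gt0 : 0 < kap.
Proof. by rewrite divr_gt0 // mulr_gt0 ?subr_sqr_gt0 // mulr_gt0 // exprn_gt0. Qed.

Lemma row_quad_bounds (h : 'I_n -> R) (t : R) (i : 'I_n) :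
  [/\ 0 <= row_quad h t i, kap * t ^+ 2 <= row_quad h t i &
      forall j, gam / 2 * (nu * h j + sigma * rho * t / Num.sqrt n%:R) ^+ 2
                <= row_quad h t i].
Proof.
set v := fun j => (nu * h j + sigma * rho * t / Num.sqrt n%:R) ^+ 2.
have g2 : 0 < gam / 2 by rewrite divr_gt0.
have a0 : 0 <= h i ^+ 2 / (2 * c) by rewrite divr_ge0 ?sqr_ge0 // mulr_ge0 // ltW.
have vj j : gam / 2 * v j <= gam / 2 * \sum_(k < n) v k.
  by rewrite ler_pM2l // ler_sum_term // => k; exact: sqr_ge0.
have V0 : 0 <= gam / 2 * \sum_(k < n) v k.
  by rewrite mulr_ge0 ?sumr_ge0 ?ltW // => k _; exact: sqr_ge0.
have T0 : 0 <= kap * t ^+ 2 by rewrite mulr_ge0 ?sqr_ge0 ?ltW.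
rewrite /row_quad -/kap -/(\sum_(k < n) v k); split => [|| j]; first by lra.
  by lra.
by have := vj j; rewrite /v; lra.
Qed.

Definition dev_quad (y : 'M[R]_n * 'cV[R]_n) : R :=
  \sum_(i < n) row_quad (fun j => y.1 i j - zstar.1 i j) (y.2 i 0 - zstar.2 i 0) i.

Let dev_row_ge0 (y : 'M[R]_n * 'cV[R]_n) (i : 'I_n) :
  0 <= row_quad (fun j => y.1 i j - zstar.1 i j) (y.2 i 0 - zstar.2 i 0) i.
Proof. by case: (row_quad_bounds (fun j => y.1 i j - zstar.1 i j) (y.2 i 0 - zstar.2 i 0) i). Qed.

Lemma dev_quad_ge0 (y : 'M[R]_n * 'cV[R]_n) : 0 <= dev_quad y.
Proof. by apply: sumr_ge0 => i _; exact: dev_row_ge0. Qed.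

Lemma dev_quad_controls : exists2 M, 0 <= M &
  forall (y : 'M[R]_n * 'cV[R]_n) (i j : 'I_n),
  (y.2 i 0 - zstar.2 i 0) ^+ 2 <= M * dev_quad y
  /\ (y.1 i j - zstar.1 i j) ^+ 2 <= M * dev_quad y.
Proof.
set Mh := (4 / gam + 2 * (sigma * rho / Num.sqrt n%:R) ^+ 2 / kap) / nu ^+ 2.
have Mh0 : 0 <= Mh.
  have g0 := ltW gam_gt0; have k0 := ltW kap_gt0.
  apply: divr_ge0 (sqr_ge0 _); apply: addr_ge0; apply: divr_ge0 => //.
  exact: mulr_ge0 _ (sqr_ge0 _).
exists (kap^-1 + Mh) => [|y i j]; first by rewrite addr_ge0 // invr_ge0 ltW.
have Q0 := dev_quad_ge0 y.
have Qi := ler_sum_term i (dev_row_ge0 y); rewrite -/(dev_quad y) in Qi.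
set t := y.2 i 0 - zstar.2 i 0 in Qi *; set h := fun j => y.1 i j - zstar.1 i j in Qi.
have [_ Qt Qv] := row_quad_bounds h t i.
have Mh_le : Mh * dev_quad y <= (kap^-1 + Mh) * dev_quad y.
  by apply: (ler_wpM2r Q0); rewrite lerDr invr_ge0 (ltW kap_gt0).
split.
  apply: le_trans (_ : kap^-1 * dev_quad y <= _); last first.
    by apply: (ler_wpM2r Q0); rewrite lerDl.
  by rewrite ler_pdivlMl //; apply: le_trans Qt Qi.
apply: le_trans Mh_le.
apply: (@sqr_le_of_affine _ _ (nu * h j + sigma * rho * t / Num.sqrt n%:R) t) => //.
- exact: le_trans (Qv j) Qi.
- exact: le_trans Qt Qi.
- by rewrite mulrAC.
Qed.

Lemma fhom_zstar_sub (gP : R) (y : 'M[R]_n * 'cV[R]_n) :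
  fhom sigma gP c gam nu rho zstar - fhom sigma gP c gam nu rho y
  = n%:R^-1 * dev_quad y + gP * (penalty y - penalty zstar).
Proof.
rewrite !fhomE.
have -> : \sum_(i < n) row_cost (fun j => y.1 i j) (y.2 i 0) i
    = \sum_(i < n) row_cost (fun j => zstar.1 i j) (zstar.2 i 0) i + dev_quad y.
  rewrite /dev_quad -big_split; apply: eq_bigr => i _ /=.
  have zsE : zstar.2 i 0 = zs by rewrite mxE.
  by rewrite row_cost_expand zsE.
ring.
Qed.

Lemma dev_quad_le_penalty (gP : R) (y : 'M[R]_n * 'cV[R]_n) : 0 <= gP ->
  fhom sigma gP c gam nu rho zstar <= fhom sigma gP c gam nu rho y ->
  dev_quad y <= n%:R * penalty zstar * gP.
Proof.
move=> gP0 le; have := fhom_zstar_sub gP y.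
have Py : 0 <= gP * penalty y by rewrite mulr_ge0 ?penalty_ge0.
rewrite mulrBr => E.
have Q_le : n%:R^-1 * dev_quad y <= gP * penalty zstar by lra.
rewrite -[dev_quad y](mulVKf (_ : n%:R != 0 :> R)) ?gt_eqF ?ltr0n //.
by rewrite -mulrA [_ * gP]mulrC ler_pM2l ?ltr0n.
Qed.

Lemma near_zstar : exists2 M, 0 <= M & forall (gP : R) (y : 'M[R]_n * 'cV[R]_n),
  0 <= gP -> fhom sigma gP c gam nu rho zstar <= fhom sigma gP c gam nu rho y ->
  forall i j, (y.2 i 0 - zstar.2 i 0) ^+ 2 <= M * gP
              /\ (y.1 i j - zstar.1 i j) ^+ 2 <= M * gP.
Proof.
have [M M0 ctrl] := dev_quad_controls.
have P0 := penalty_ge0 zstar.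
exists (M * (n%:R * penalty zstar)) => [|gP y gP0 le i j].
  exact: mulr_ge0 M0 (mulr_ge0 (ler0n _ n) P0).
have Q_le := dev_quad_le_penalty gP0 le.
have MQ : M * dev_quad y <= M * (n%:R * penalty zstar) * gP.
  by rewrite -mulrA ler_wpM2l.
by have [? ?] := ctrl y i j; split; apply: le_trans MQ.
Qed.

Lemma zstar_maximiser0 : is_maximiser (fhom sigma 0 c gam nu rho) zstar.
Proof.
move=> y; rewrite -subr_ge0 fhom_zstar_sub mul0r addr0.
by rewrite mulr_ge0 ?invr_ge0 ?ler0n ?dev_quad_ge0.
Qed.

Lemma maximiser0_unique (y : 'M[R]_n * 'cV[R]_n) :
  is_maximiser (fhom sigma 0 c gam nu rho) y -> y = zstar.
Proof.
move=> ymax; have [M _ near] := near_zstar.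
have sqr_le0 x : x ^+ 2 <= M * 0 -> x = 0.
  by rewrite mulr0 => x0; apply/eqP; rewrite -sqrf_eq0 eq_le x0 sqr_ge0.
have := near 0 y (lexx 0) (ymax zstar).
case: y {ymax} => Y S dev0; congr pair; apply/matrixP => i j; apply/eqP.
  by rewrite -subr_eq0; apply/eqP/sqr_le0; case: (dev0 i j).
by rewrite (ord1 j) -subr_eq0; apply/eqP/sqr_le0; case: (dev0 i i).
Qed.

Lemma maximiser_cvg (g : R -> 'M[R]_n * 'cV[R]_n) :
  (forall gP, 0 < gP -> is_maximiser (fhom sigma gP c gam nu rho) (g gP)) ->
  [/\ forall i, (g gP).2 i 0 @[gP --> 0^'+] --> zstar.2 i 0,
      forall i, (g gP).1 i i @[gP --> 0^'+] --> zstar.1 i i &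
      forall i j, (g gP).1 i j @[gP --> 0^'+] --> zstar.1 i j].
Proof.
move=> gmax; have [M _ near] := near_zstar.
have dev gP i j : 0 < gP -> ((g gP).2 i 0 - zstar.2 i 0) ^+ 2 <= M * gP
                             /\ ((g gP).1 i j - zstar.1 i j) ^+ 2 <= M * gP.
  by move=> gP0; exact: near (ltW gP0) (gmax gP gP0 zstar) i j.
split=> [i | i | i j]; apply: (@cvg_at_right0_of_sqr_le _ _ _ M) => gP gP0.
1,2: by case: (dev gP i i gP0).
by case: (dev gP i j gP0).
Qed.
End Maximiser.
End Homogeneous.

Theorem mainTheorem4 (R : realType) :
  (forall (n : nat) (sigma gam c nu rho : R),
     (1 <= n)%N -> 0 < sigma -> 0 < gam -> 0 < c -> 0 < nu -> -1 < rho < 1 ->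
     (0 <= eta_n n gam c nu rho < n%:R)
     /\ (exists z : 'M[R]_n * 'cV[R]_n,
          [/\ is_maximiser (fhom sigma 0 c gam nu rho) z,
              (forall y, is_maximiser (fhom sigma 0 c gam nu rho) y -> y = z),
              [/\ (forall i : 'I_n, z.2 i 0 = z0s n sigma gam c nu rho),
                  (forall i : 'I_n, z.1 i i = z0d n gam c nu rho) &
                  (forall i j : 'I_n, i != j -> z.1 i j = z0o n gam c nu rho)] &
              (forall g : R -> 'M[R]_n * 'cV[R]_n,
                 (forall gP, 0 < gP -> is_maximiser (fhom sigma gP c gam nu rho) (g gP)) ->
                 [/\ (forall i : 'I_n, (g gP).2 i 0 @[gP --> 0^'+] --> z.2 i 0),
                     (forall i : 'I_n, (g gP).1 i i @[gP --> 0^'+] --> z.1 i i) &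
                     (forall i j : 'I_n, i != j ->
                        (g gP).1 i j @[gP --> 0^'+] --> z.1 i j)])]))
  /\ (forall (n : nat) (sigma gam c nu rho1 rho2 : R),
     (1 <= n)%N -> 0 < sigma -> 0 < gam -> 0 < c -> 0 < nu ->
     -1 < rho1 < 1 -> -1 < rho2 < 1 -> `|rho1| < `|rho2| ->
     `|z0s n sigma gam c nu rho1| < `|z0s n sigma gam c nu rho2|)
  /\ (forall (n : nat) (sigma gam c1 c2 nu rho : R),
     (1 <= n)%N -> 0 < sigma -> 0 < gam -> 0 < c1 -> c1 < c2 -> 0 < nu -> -1 < rho < 1 ->
     `|z0s n sigma gam c2 nu rho| <= `|z0s n sigma gam c1 nu rho|
     /\ (rho != 0 -> `|z0s n sigma gam c2 nu rho| < `|z0s n sigma gam c1 nu rho|))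
  /\ (forall (n : nat) (sigma gam c nu1 nu2 rho : R),
     (1 <= n)%N -> 0 < sigma -> 0 < gam -> 0 < c -> -1 < rho < 1 ->
     0 < nu1 -> nu1 < nu2 -> nu2 <= nudag n gam c rho ->
     `|z0s n sigma gam c nu1 rho| <= `|z0s n sigma gam c nu2 rho|
     /\ (rho != 0 -> `|z0s n sigma gam c nu1 rho| < `|z0s n sigma gam c nu2 rho|))
  /\ (forall (n : nat) (sigma gam c nu1 nu2 rho : R),
     (1 <= n)%N -> 0 < sigma -> 0 < gam -> 0 < c -> -1 < rho < 1 ->
     nudag n gam c rho <= nu1 -> nu1 < nu2 ->
     `|z0s n sigma gam c nu2 rho| <= `|z0s n sigma gam c nu1 rho|
     /\ (rho != 0 -> `|z0s n sigma gam c nu2 rho| < `|z0s n sigma gam c nu1 rho|))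
  /\ (forall (n : nat) (gam c nu rho1 rho2 : R),
     (2 <= n)%N -> 0 < gam -> 0 < c -> 0 < nu ->
     -1 < rho1 < 1 -> -1 < rho2 < 1 -> `|rho1| < `|rho2| ->
     z0o n gam c nu rho1 < z0o n gam c nu rho2)
  /\ (forall (n : nat) (gam c1 c2 nu rho : R),
     (2 <= n)%N -> 0 < gam -> 0 < c1 -> c1 < c2 -> 0 < nu -> -1 < rho < 1 ->
     z0o n gam c2 nu rho <= z0o n gam c1 nu rho
     /\ (rho != 0 -> z0o n gam c2 nu rho < z0o n gam c1 nu rho))
  /\ (forall (n : nat) (gam c nu1 nu2 rho : R),
     (2 <= n)%N -> 0 < gam -> 0 < c -> 0 < nu1 -> nu1 < nu2 -> -1 < rho < 1 ->
     z0o n gam c nu2 rho <= z0o n gam c nu1 rho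
     /\ (rho != 0 -> z0o n gam c nu2 rho < z0o n gam c nu1 rho))
  /\ (forall (n : nat) (gam c nu rho1 rho2 : R),
     (1 <= n)%N -> 0 < gam -> 0 < c -> 0 < nu ->
     -1 < rho1 < 1 -> -1 < rho2 < 1 -> `|rho1| < `|rho2| ->
     z0d n gam c nu rho1 < z0d n gam c nu rho2)
  /\ (forall (n : nat) (gam c1 c2 nu rho : R),
     (1 <= n)%N -> 0 < gam -> 0 < c1 -> c1 < c2 -> 0 < nu -> -1 < rho < 1 ->
     z0d n gam c2 nu rho < z0d n gam c1 nu rho)
  /\ (forall (n : nat) (gam c nu1 nu2 rho : R),
     (1 <= n)%N -> 0 < gam -> 0 < c -> 0 < nu1 -> nu1 < nu2 -> -1 < rho < 1 ->
     z0d n gam c nu2 rho < z0d n gam c nu1 rho).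
Proof.
split.
  move=> n sigma gam c nu rho n_gt0 s0 g0 c0 nu0 rr.
  split; first exact: eta_n_bounds.
  exists (zstar n sigma gam c nu rho); split.
  - exact: zstar_maximiser0.
  - exact: maximiser0_unique.
  - by split=> [i | i | i j ij]; rewrite !mxE ?eqxx ?(negbTE ij).
  - by move=> g gmax; have [] := maximiser_cvg n_gt0 s0 g0 c0 nu0 rr gmax.
split; first by move=> n *; apply: normr_z0s_ltr_rho.
split; first by move=> n *; apply: normr_z0s_decr_c.
split; first by move=> n *; apply: normr_z0s_incr_nu.
split; first by move=> n *; apply: normr_z0s_decr_nu.
split; first by move=> n ? ? ? ? ? n2 *; apply: (z0o_ltr_rho (ltnW n2)).
split; first by move=> n ? ? ? ? ? n2 *; apply: (z0o_decr_c (ltnW n2)).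
split; first by move=> n ? ? ? ? ? n2 *; apply: (z0o_decr_nu (ltnW n2)).
split; first by move=> n *; apply: z0d_ltr_rho.
split; first by move=> n *; apply: z0d_decr_c.
by move=> n *; apply: z0d_decr_nu.
Qed.
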